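(* Let $M \subseteq \mathrm{Inj}(\Omega)$ be a normal submonoid. Then either $M \cap \mathrm{Inj}_{\infty}(\Omega) = \emptyset$ or $\mathrm{Inj}_{\infty}(\Omega) \subseteq M$.
   Context: $\Omega$ is a countably infinite set; maps are written on the right and composed left to right. $\mathrm{Inj}(\Omega)$ is the monoid of all injective maps $\Omega\to\Omega$, $\mathrm{Sym}(\Omega)$ the group of permutations of $\Omega$. $\mathrm{Inj}_\infty(\Omega)=\{f\in\mathrm{Inj}(\Omega): |\Omega\setminus(\Omega)f|=\aleph_0\}$. A subset of $\mathrm{Inj}(\Omega)$ is normal if it is closed under $f\mapsto afa^{-1}$ for all $a\in\mathrm{Sym}(\Omega)$. *)

From mathcomp Require Import ssreflect ssrfun ssrbool.
Set Implicit Arguments. Unset Strict Implicit.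

Definition countably_infinite (Omega : Type) : Prop :=
  exists e : Omega -> nat, bijective e.

Definition Inj (Omega : Type) (f : Omega -> Omega) : Prop := injective f.

Definition Sym (Omega : Type) (a : Omega -> Omega) : Prop := bijective a.

Definition not_in_image (Omega : Type) (f : Omega -> Omega) (y : Omega) : Prop :=
  forall x, f x <> y.

(* Inj_infty(Omega): injective f with |Omega \ (Omega)f| = aleph_0, i.e. the
   complement of the image is in bijection with nat. *)
Definition Inj_infty (Omega : Type) (f : Omega -> Omega) : Prop :=
  injective f /\
  exists g : nat -> Omega,
    injective g /\ (forall n, not_in_image f (g n)) /\
    (forall y, not_in_image f y -> exists n, g n = y).

(* Maps are written on the right and composed left to right, so
   x(f g) = (x f) g, i.e. (f g) is [fun x => g (f x)], and
   x (a f a^{-1}) = a^{-1} (f (a x)). *)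
Definition rcomp (Omega : Type) (f g : Omega -> Omega) : Omega -> Omega :=
  fun x => g (f x).

Definition submonoid_Inj (Omega : Type) (M : (Omega -> Omega) -> Prop) : Prop :=
  (forall f, M f -> Inj f) /\ M id /\
  (forall f g, M f -> M g -> M (rcomp f g)).

(* M is normal: closed under f |-> a f a^{-1} for all a in Sym(Omega);
   a^{-1} is given as the two-sided inverse b of a. *)
Definition normal_Inj (Omega : Type) (M : (Omega -> Omega) -> Prop) : Prop :=
  forall (a b : Omega -> Omega) (f : Omega -> Omega),
    cancel a b -> cancel b a -> M f -> M (rcomp (rcomp a f) b).

(* A map is shift-like when it is conjugate to (i, n) |-> (i, n + 1) on
   nat * nat, so a normal M contains all shift-like maps or none.  If f in M
   lies in Inj_infty, let t be the involution exchanging each point of the core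
   of f (the points on no forward f-orbit of a point outside (Omega)f) with a
   fresh such orbit start; then t f t f in M is shift-like, because the depth
   along those orbits strictly increases.  Conversely every g in Inj_infty is
   Q P with Q, P shift-like: Q sends Omega into half of Omega \ (Omega)g, and P
   returns it by g while sending everything else into another part of it. *)

From mathcomp Require Import ssreflect ssrfun ssrbool eqtype ssrnat zify.
From mathcomp Require Import boolp classical_sets functions cardinality.
Set Implicit Arguments. Unset Strict Implicit.

Local Open Scope card_scope.

Lemma enum_infinite_subset (Omega : Type) (e : Omega -> nat) (S : set Omega)
    (k : nat -> Omega) :
  injective e -> injective k -> (forall n, S (k n)) ->
  exists c : nat -> Omega, [/\ injective c, forall n, S (c n) &
    forall y, S y -> exists n, c n = y].
Proof.
move=> e_inj k_inj Sk.
have /card_bijP[f [g fK gK]] : [set: nat] #= S.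
  apply/card_eqPle; split.
    have [f] : $|{injfun [set: nat] >-> S}|.
      by apply/injfunPex; exists k => // m n _ _; apply: k_inj.
    exact: inj_card_le.
  have [f] : $|{injfun S >-> [set: nat]}|.
    by apply/injfunPex; exists e => // m n _ _; apply: e_inj.
  exact: inj_card_le.
exists (fun n => val (f (exist _ n (in_setT n)))); split.
- by move=> m n /val_inj /(can_inj fK) [].
- by move=> n; apply/set_mem; case: (f _).
- move=> y Sy; exists (val (g (exist _ y (mem_set Sy)))).
  have := gK (exist _ y (mem_set Sy)); case: (g _) => n nT /= fnT.
  by rewrite (_ : exist _ n _ = exist _ n nT) ?fnT //; apply: val_inj.
Qed.

Section SwapAlong.

Variables (Omega : Type) (X : Omega -> Prop) (s : Omega -> Omega).

Definition swap_along (x : Omega) : Omega :=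
  if pselect (X x) is left _ then s x
  else if pselect (exists y, X y /\ s y = x) is left ex then sval (cid ex) else x.

Hypotheses (s_inj : injective s) (s_out : forall x, X x -> ~ X (s x)).

Lemma swap_along_in x : X x -> swap_along x = s x.
Proof. by rewrite /swap_along; case: pselect. Qed.

Lemma swap_along_image x : X x -> swap_along (s x) = x.
Proof.
move=> Xx; rewrite /swap_along.
case: (pselect (X (s x))) => [Xsx|_]; first by case: (s_out Xx).
case: pselect => [ex|[]]; last by exists x.
by case: (cid ex) => y [_ /= syx]; apply: s_inj.
Qed.

Lemma swap_along_fix x :
  ~ X x -> (forall y, X y -> s y <> x) -> swap_along x = x.
Proof.
move=> NXx Ns; rewrite /swap_along; case: pselect => // _.
by case: pselect => // -[y [Xy syx]]; case: (Ns y Xy).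
Qed.

Lemma swap_along_out x : ~ X x -> swap_along x = x \/ X (swap_along x).
Proof.
move=> NXx; have [[y [Xy <-]]|Ns] := EM (exists y, X y /\ s y = x).
  by right; rewrite swap_along_image.
by left; apply: swap_along_fix => // y Xy syx; apply: Ns; exists y.
Qed.

Lemma swap_alongK : involutive swap_along.
Proof.
move=> x; have [Xx|NXx] := EM (X x).
  by rewrite (swap_along_in Xx) swap_along_image.
have [[y [Xy <-]]|Ns] := EM (exists y, X y /\ s y = x).
  by rewrite swap_along_image ?swap_along_in.
have fix_x : swap_along x = x.
  by apply: swap_along_fix => // y Xy syx; apply: Ns; exists y.
by rewrite !fix_x.
Qed.

End SwapAlong.

Section Chains.

Variables (Omega : Type) (u : Omega -> Omega) (c : nat -> Omega).

Definition chain (p : nat * nat) : Omega := iter p.2 u (c p.1).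

Definition chain_depth (x : Omega) : nat :=
  if pselect (exists p, chain p = x) is left ex then (sval (cid ex)).2 else 0.

Hypotheses (u_inj : injective u) (c_inj : injective c)
  (c_out : forall n, not_in_image u (c n)).

Lemma chain_inj : injective chain.
Proof.
move=> [i n] [j m]; rewrite /chain /=.
elim: n m => [|n IHn] [|m] /=.
- by move=> /c_inj ->.
- by move=> cim; case: (c_out (esym cim)).
- by move=> cjm; case: (c_out cjm).
- by move=> /u_inj /IHn [-> ->].
Qed.

Lemma chain_depthE p : chain_depth (chain p) = p.2.
Proof.
rewrite /chain_depth; case: pselect => [ex|[]]; last by exists p.
by case: (cid ex) => q /= /chain_inj ->.
Qed.

Lemma chain_depth_out x : ~ (exists p, chain p = x) -> chain_depth x = 0.
Proof. by rewrite /chain_depth; case: pselect. Qed.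

Lemma chain_u x : (exists p, chain p = u x) <-> exists p, chain p = x.
Proof.
split=> [[[i [|n]] /= cu]|[[i n] <-]]; last by exists (i, n.+1).
  by case: (c_out (esym cu)).
by exists (i, n); apply: u_inj.
Qed.

Lemma chain_onto (r : Omega -> nat) :
  (forall x, r x < r (u x)) ->
  (forall y, not_in_image u y -> exists n, c n = y) ->
  forall y, exists p, chain p = y.
Proof.
move=> r_lt c_onto y; elim: {y}(r y).+1 {-2}y (ltnSn (r y)) => [|k IHk] y ry //.
have [[x xy]|Ny] := EM (exists x, u x = y).
  have /IHk[[i n] cx] : r x < k by move: (r_lt x) ry; rewrite xy; lia.
  by exists (i, n.+1); rewrite -xy -cx.
have [n <-] : exists n, c n = y by apply: c_onto => x xy; apply: Ny; exists x.
by exists (n, 0).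
Qed.

End Chains.

(* Maps conjugate to the shift [(i, n) |-> (i, n.+1)] of [nat * nat]: the rank
   rules out cycles and infinite backward orbits. *)
Definition shift_like (Omega : Type) (u : Omega -> Omega) : Prop :=
  [/\ injective u, exists r : Omega -> nat, forall x, r x < r (u x) &
      exists k : nat -> Omega, injective k /\ forall n, not_in_image u (k n)].

Lemma shift_like_chain_bij (Omega : Type) (e : Omega -> nat)
    (u : Omega -> Omega) :
  injective e -> shift_like u -> exists c, bijective (chain u c).
Proof.
move=> e_inj [u_inj [r r_lt] [k [k_inj k_out]]].
have [c [c_inj c_out c_onto]] := enum_infinite_subset e_inj k_inj k_out.
exists c; rewrite -setTT_bijective; split=> //.
- by move=> p q _ _; apply: chain_inj.
- by move=> y _; have [p cp] := chain_onto r_lt c_onto y; exists p.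
Qed.

Lemma normal_shift_like_closed (Omega : Type) (e : Omega -> nat)
    (M : (Omega -> Omega) -> Prop) (u v : Omega -> Omega) :
  injective e -> normal_Inj M -> shift_like u -> shift_like v -> M u -> M v.
Proof.
move=> e_inj HN /(shift_like_chain_bij e_inj)[c [p pK Kp]].
move=> /(shift_like_chain_bij e_inj)[d [q qK Kq]] Mu.
have -> : v = rcomp (rcomp (chain u c \o q) u) (chain v d \o p).
  apply: funext => x; rewrite /rcomp /= -{1 2}(Kq x).
  by case: (q x) => i n; rewrite qK (pK (i, n.+1)).
by apply: HN Mu => x /=; rewrite ?pK ?qK ?Kp ?Kq.
Qed.

Section CoreSwap.

Variables (Omega : Type) (e : Omega -> nat) (f : Omega -> Omega) (c : nat -> Omega).

Let off_chain (x : Omega) : Prop := ~ exists p, chain f c p = x.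

Definition core_swap : Omega -> Omega := swap_along off_chain (fun x => c (e x)).

Hypotheses (e_inj : injective e) (f_inj : injective f) (c_inj : injective c)
  (c_out : forall n, not_in_image f (c n)).

Let chain_head_inj : injective (fun x => c (e x)).
Proof. by move=> x y /c_inj /e_inj. Qed.

Let chain_head_on_chain x : off_chain x -> ~ off_chain (c (e x)).
Proof. by move=> _; apply; exists (e x, 0). Qed.

Definition core_twist (x : Omega) : Omega := f (core_swap (f (core_swap x))).

Lemma core_swapK : involutive core_swap.
Proof. exact: swap_alongK chain_head_inj chain_head_on_chain. Qed.

Lemma chain_depth_core_swap y :
  chain_depth f c (core_swap y) < chain_depth f c (f (core_swap (f y))).
Proof.
have depthE := chain_depthE f_inj c_inj c_out.
have [[[i n] <-]|Ny] := EM (exists p, chain f c p = y).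
- have -> : core_swap (f (chain f c (i, n))) = chain f c (i, n.+1).
    apply: swap_along_fix; first by apply; exists (i, n.+1).
    by move=> x _ /esym; apply: c_out.
  rewrite (depthE (i, n.+2)).
  have [|t_fix|Nt] := swap_along_out chain_head_inj chain_head_on_chain
    (x := chain f c (i, n)).
  + by apply; exists (i, n).
  + by rewrite /core_swap t_fix depthE.
  + by rewrite chain_depth_out.
- have Nfy : ~ exists p, chain f c p = f y by move/(chain_u f_inj c_out).
  rewrite /core_swap !swap_along_in //.
  by rewrite (depthE (e y, 0)) (depthE (e (f y), 1)).
Qed.

Lemma shift_like_core_twist : shift_like core_twist.
Proof.
have tK := core_swapK; split.
- by move=> x y /f_inj /(inv_inj tK) /f_inj /(inv_inj tK).
- exists (chain_depth f c) => x.
  by have := chain_depth_core_swap (core_swap x); rewrite tK.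
- by exists c; split=> // n x; apply: c_out.
Qed.

End CoreSwap.

Lemma normal_submonoid_shift_like (Omega : Type) (e : Omega -> nat)
    (M : (Omega -> Omega) -> Prop) (f : Omega -> Omega) :
  injective e -> submonoid_Inj M -> normal_Inj M -> M f -> Inj_infty f ->
  exists u, M u /\ shift_like u.
Proof.
move=> e_inj [_ [_ Mcomp]] HN Mf [f_inj [c [c_inj [c_out _]]]].
have tK := core_swapK f e_inj c_inj.
exists (core_twist e f c); split.
- exact: Mcomp (HN _ _ _ tK tK Mf) Mf.
- exact: shift_like_core_twist.
Qed.

Section Factorization.

Variables (Omega : Type) (e : Omega -> nat) (g : Omega -> Omega) (d : nat -> Omega).

Definition code (x : Omega) : nat :=
  if pselect (exists k, d k = x) is left ex then 2 * sval (cid ex) + 1 else 2 * e x.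

Definition first_factor (y : Omega) : Omega := d (2 * code y + 2).

Definition second_factor (x : Omega) : Omega :=
  if pselect (exists y, first_factor y = x) is left ex then g (sval (cid ex))
  else d (4 * code x + 1).

Hypotheses (e_inj : injective e) (g_inj : injective g) (d_inj : injective d)
  (d_out : forall n, not_in_image g (d n)).

Lemma code_d k : code (d k) = 2 * k + 1.
Proof.
rewrite /code; case: pselect => [ex|[]]; last by exists k.
by case: (cid ex) => l /= /d_inj ->.
Qed.

Lemma code_out x : ~ (exists k, d k = x) -> code x = 2 * e x.
Proof. by rewrite /code; case: pselect. Qed.

Lemma code_inj : injective code.
Proof.
move=> x y; have [[k <-]|Nx] := EM (exists k, d k = x);
  have [[l <-]|Ny] := EM (exists k, d k = y);
  rewrite ?code_d ?code_out //; try lia.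
- by move=> kl; congr d; lia.
- by move=> exy; apply: e_inj; lia.
Qed.

Lemma first_factor_inj : injective first_factor.
Proof. by move=> x y /d_inj xy; apply: code_inj; lia. Qed.

Lemma second_factor_first y : second_factor (first_factor y) = g y.
Proof.
rewrite /second_factor; case: pselect => [ex|[]]; last by exists y.
by case: (cid ex) => z /= /first_factor_inj ->.
Qed.

Lemma second_factor_out x :
  ~ (exists y, first_factor y = x) -> second_factor x = d (4 * code x + 1).
Proof. by rewrite /second_factor; case: pselect. Qed.

Lemma shift_like_first_factor : shift_like first_factor.
Proof.
split; first exact: first_factor_inj.
- by exists code => y; rewrite /first_factor code_d; lia.
- exists (fun n => d (2 * n + 1)); split; first by move=> m n /d_inj; lia.
  by move=> n y /d_inj; lia.
Qed.

Lemma shift_like_second_factor : shift_like second_factor.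
Proof.
pose in_first_range x := exists y, first_factor y = x.
have Ng y : ~ in_first_range (g y) by move=> [z /esym /d_out].
have Nd x : ~ in_first_range (d (4 * code x + 1)) by move=> [z /d_inj]; lia.
split.
- move=> x1 x2; have [[y1 <-]|N1] := EM (in_first_range x1);
    have [[y2 <-]|N2] := EM (in_first_range x2);
    rewrite ?second_factor_first ?second_factor_out //.
  + by move=> /g_inj ->.
  + by move=> /d_out.
  + by move=> /esym /d_out.
  + by move=> /d_inj xx; apply: code_inj; lia.
- exists (fun x => if pselect (in_first_range x) is left _ then 0 else code x + 1) => x.
  have [[y <-]|Nx] := EM (in_first_range x).
    rewrite second_factor_first.
    case: (pselect (in_first_range (g y))) => [gR|_]; first by case: (Ng y gR).
    by case: pselect => [_|[]]; [lia|exists y].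
  rewrite second_factor_out //.
  case: (pselect (in_first_range x)) => [xR|_]; first by case: Nx.
  case: pselect => [dR|_]; first by case: (Nd x).
  by rewrite code_d; lia.
- exists (fun n => d (4 * n + 3)); split; first by move=> m n /d_inj; lia.
  move=> n x; have [[y <-]|Nx] := EM (in_first_range x).
    by rewrite second_factor_first; apply: d_out.
  by rewrite second_factor_out // => /d_inj; lia.
Qed.

End Factorization.

Lemma Inj_infty_shift_like_factor (Omega : Type) (e : Omega -> nat)
    (g : Omega -> Omega) :
  injective e -> Inj_infty g ->
  exists P Q, [/\ shift_like P, shift_like Q & g = rcomp Q P].
Proof.
move=> e_inj [g_inj [d [d_inj [d_out _]]]].
exists (second_factor e g d), (first_factor e d); split.
- exact: shift_like_second_factor.
- exact: shift_like_first_factor.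
- by apply: funext => y; rewrite /rcomp second_factor_first.
Qed.

Theorem mainTheorem3 (Omega : Type) (HOmega : countably_infinite Omega)
  (M : (Omega -> Omega) -> Prop)
  (HM : submonoid_Inj M) (HN : normal_Inj M) :
  (forall f, ~ (M f /\ Inj_infty f)) \/ (forall f, Inj_infty f -> M f).
Proof.
have [e /bij_inj e_inj] := HOmega.
have [[f [Mf f_infty]]|NM] := EM (exists f, M f /\ Inj_infty f); last first.
  by left=> f Mf; apply: NM; exists f.
right=> g g_infty.
have [u [Mu u_shift]] := normal_submonoid_shift_like e_inj HM HN Mf f_infty.
have [P [Q [P_shift Q_shift ->]]] := Inj_infty_shift_like_factor e_inj g_infty.
have [_ [_ Mcomp]] := HM.
by apply: Mcomp; apply: normal_shift_like_closed e_inj HN u_shift _ Mu.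
Qed.
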